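(* Let $T=(T_1,\dots,T_m)$ be a commuting $m$-tuple of bounded operators on a Hilbert space $\mathcal H$. Then the joint approximate point spectrum $\sigma_{ap}(T)$ is disjoint from the open ball $\mathbb B_{m_\infty(T)}=\{\lambda\in\mathbb C^m:\|\lambda\|_2<m_\infty(T)\}$, where $$m_\infty(T)=\sup_{k\ge1}\ \inf_{h\in\mathcal H,\ \|h\|=1}\big\|Q_T^k(I)h\big\|^{1/(2k)},\qquad Q_T^k(I)=\sum_{|\alpha|=k}\frac{k!}{\alpha!}\,T^{*\alpha}T^\alpha.$$
   Context: For $\alpha\in\mathbb N^m$, $|\alpha|=\sum\alpha_i$, $\alpha!=\prod\alpha_i!$, $T^\alpha=T_1^{\alpha_1}\cdots T_m^{\alpha_m}$ and $T^{*\alpha}=(T^\alpha)^*$. The joint approximate point spectrum $\sigma_{ap}(T)$ is the set of $\lambda\in\mathbb C^m$ for which there are unit vectors $h_n$ with $\sum_j\|(T_j-\lambda_j)h_n\|\to0$. *)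

From mathcomp Require Import all_boot all_order all_algebra.
From mathcomp Require Import all_classical all_reals all_analysis.
From mathcomp Require Import complex.
Set Implicit Arguments. Unset Strict Implicit. Unset Printing Implicit Defensive.
Import Order.TTheory GRing.Theory Num.Theory.
Local Open Scope ring_scope.
Local Open Scope classical_set_scope.

Section Hilbert.
Variable R : realType.
Variable V : lmodType R[i].
Variable ip : V -> V -> R[i].

Definition inner_product : Prop :=
  [/\ forall (a : R[i]) (x y z : V), ip (a *: x + y) z = a * ip x z + ip y z,
      forall x y : V, ip y x = (ip x y)^*,
      forall x : V, 0 <= ip x x &
      forall x : V, ip x x = 0 -> x = 0].

Definition hnorm (x : V) : R := Num.sqrt (complex.Re (ip x x)).

Definition complete_ip : Prop :=
  forall u : nat -> V,
    (forall e : R, 0 < e -> exists N : nat, forall n k : nat,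
        (N <= n)%N -> (N <= k)%N -> hnorm (u n - u k) < e) ->
    exists l : V, forall e : R, 0 < e -> exists N : nat, forall n : nat,
        (N <= n)%N -> hnorm (u n - l) < e.

Definition hilbert_space : Prop := inner_product /\ complete_ip.

Definition bounded_op (A : V -> V) : Prop :=
  (forall (a : R[i]) (x y : V), A (a *: x + y) = a *: A x + A y) /\
  exists M : R, forall x : V, hnorm (A x) <= M * hnorm x.

Definition is_adjoint (A B : V -> V) : Prop :=
  forall x y : V, ip (A x) y = ip x (B y).

Variable m : nat.

Definition Tpow (T : 'I_m -> V -> V) (alpha : 'I_m -> nat) : V -> V :=
  foldr (fun j f => iter (alpha j) (T j) \o f) id (enum 'I_m).

(* T^{*alpha} = (T^alpha)^* = T_m^{*alpha_m} ... T_1^{*alpha_1} *)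
Definition Tstarpow (Ts : 'I_m -> V -> V) (alpha : 'I_m -> nat) : V -> V :=
  foldr (fun j f => f \o iter (alpha j) (Ts j)) id (enum 'I_m).

(* Q_T^k(I) h = sum_{|alpha| = k} k!/alpha! T^{*alpha} T^alpha h;
   multi-indices alpha with |alpha| = k are encoded as functions
   'I_m -> 'I_k.+1 with coordinate sum k. *)
Definition QTk (T Ts : 'I_m -> V -> V) (k : nat) (h : V) : V :=
  \sum_(alpha : {ffun 'I_m -> 'I_k.+1} | (\sum_(j < m) (alpha j : nat))%N == k)
     (((k`!)%:R / (\prod_(j < m) ((alpha j : nat)`!)%:R)) : R[i])
       *: Tstarpow Ts (fun j => alpha j : nat) (Tpow T (fun j => alpha j : nat) h).

Definition m_infty (T Ts : 'I_m -> V -> V) : \bar R :=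
  ereal_sup [set ereal_inf
               [set ((hnorm (QTk T Ts k h)) `^ ((2 * k)%:R)^-1)%:E
                 | h in [set h : V | hnorm h = 1]]
             | k in [set k : nat | (1 <= k)%N]].

Definition sigma_ap (T : 'I_m -> V -> V) (lam : 'I_m -> R[i]) : Prop :=
  exists hn : nat -> V, (forall n, hnorm (hn n) = 1) /\
    ((fun n => \sum_(j < m) hnorm (T j (hn n) - lam j *: hn n)) : R^nat) @ \oo --> (0 : R^o).

Definition norm2 (lam : 'I_m -> R[i]) : R :=
  Num.sqrt (\sum_(j < m) complex.Re ((lam j)^* * lam j)).

End Hilbert.

(* Fix k >= 1 and let Q = Q_T^k(I). Since <Q h, h> = sum_|a|=k k!/a! |T^a h|^2,
   Q is a positive self-adjoint bounded operator. If m_infty(T) > |lam|, then for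
   some k there is c > |lam|^(2k) with |Q h| >= c |h| for all h, and for a positive
   self-adjoint operator this improves to <Q h, h> >= c |h|^2; this is shown
   without spectral theory, by repeatedly raising a lower bound t on the quadratic
   form towards c. On the other hand, if h_n are unit approximate eigenvectors of
   T at lam, then |T^a h_n| -> |lam^a|, so by the multinomial theorem
   <Q h_n, h_n> -> |lam|^(2k) < c, a contradiction. *)

From mathcomp Require Import all_boot all_order all_algebra.
From mathcomp Require Import all_classical all_reals all_analysis.
From mathcomp Require Import complex ring lra zify.
Import Order.TTheory GRing.Theory Num.Theory numFieldNormedType.Exports.
Local Open Scope ring_scope.
Local Open Scope classical_set_scope.
Set Implicit Arguments. Unset Strict Implicit.

Local Notation Re := complex.Re.
Local Notation normc := ComplexField.Normc.normc.

Lemma Re_conj (R : rcfType) (z : R[i]) : Re z^* = Re z.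
Proof. by case: z. Qed.

Lemma Re_realM (R : rcfType) (r : R) (z : R[i]) : Re (r%:C%C * z) = r * Re z.
Proof. by case: z => a b /=; rewrite mul0r subr0. Qed.

Lemma Re_conjM (R : rcfType) (z : R[i]) : Re (z^* * z) = normc z ^+ 2.
Proof.
by case: z => a b /=; rewrite sqr_sqrtr ?addr_ge0 ?sqr_ge0 // !expr2; ring.
Qed.

Lemma normc_ge0 (R : rcfType) (z : R[i]) : 0 <= normc z.
Proof. by case: z => a b; apply: sqrtr_ge0. Qed.

Lemma ge0_complex_real (R : rcfType) (z : R[i]) : 0 <= z -> z = (Re z)%:C%C.
Proof. by case: z => a b; rewrite lecE /= => /andP[/eqP -> _]. Qed.

Lemma normc_real (R : rcfType) (r : R) : normc r%:C%C = `|r|.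
Proof. by rewrite /= expr0n addr0 sqrtr_sqr. Qed.

Lemma normcX (R : rcfType) (z : R[i]) n : normc (z ^+ n) = normc z ^+ n.
Proof.
elim: n => [|n IH]; first exact: ComplexField.Normc.normc1.
by rewrite !exprS ComplexField.Normc.normcM IH.
Qed.

Lemma normc_prod (R : rcfType) (I : finType) (F : I -> R[i]) :
  normc (\prod_i F i) = \prod_i normc (F i).
Proof.
exact: (big_morph _ (@ComplexField.Normc.normcM R) (ComplexField.Normc.normc1 R)).
Qed.

Section InnerProduct.
Variables (R : realType) (V : lmodType R[i]) (ip : V -> V -> R[i]).
Hypothesis ip_inner : inner_product ip.

Lemma ipDZl a x y z : ip (a *: x + y) z = a * ip x z + ip y z.
Proof. by case: ip_inner => H _ _ _; apply: H. Qed.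

Lemma ip_conj x y : ip x y = (ip y x)^*.
Proof. by case: ip_inner => _ H _ _; apply: H. Qed.

Lemma ipxx_ge0 x : 0 <= ip x x.
Proof. by case: ip_inner => _ _ H _; apply: H. Qed.

Lemma ipxx_eq0 x : ip x x = 0 -> x = 0.
Proof. by case: ip_inner => _ _ _ H; apply: H. Qed.

Lemma ip0l z : ip 0 z = 0.
Proof.
apply: (@addrI _ (ip 0 z)); rewrite addr0.
by rewrite -{1}(mul1r (ip 0 z)) -ipDZl scaler0 addr0.
Qed.

Lemma ipDl x y z : ip (x + y) z = ip x z + ip y z.
Proof. by rewrite -[x]scale1r ipDZl mul1r scale1r. Qed.

Lemma ipZl a x z : ip (a *: x) z = a * ip x z.
Proof. by rewrite -[a *: x]addr0 ipDZl ip0l addr0. Qed.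

Lemma ipDr x y z : ip x (y + z) = ip x y + ip x z.
Proof. by rewrite ip_conj ipDl rmorphD /= -!ip_conj. Qed.

Lemma ipZr a x y : ip x (a *: y) = a^* * ip x y.
Proof. by rewrite ip_conj ipZl rmorphM /= -ip_conj. Qed.

Definition ipr x y := Re (ip x y).

Definition hnorm2 x := ipr x x.

Lemma iprC x y : ipr x y = ipr y x.
Proof. by rewrite /ipr ip_conj Re_conj. Qed.

Lemma ipr0l z : ipr 0 z = 0.
Proof. by rewrite /ipr ip0l. Qed.

Lemma iprDl x y z : ipr (x + y) z = ipr x z + ipr y z.
Proof. by rewrite /ipr ipDl raddfD. Qed.

Lemma iprDr x y z : ipr x (y + z) = ipr x y + ipr x z.
Proof. by rewrite iprC iprDl !(iprC _ x). Qed.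

Lemma iprZl (r : R) x z : ipr (r%:C%C *: x) z = r * ipr x z.
Proof. by rewrite /ipr ipZl Re_realM. Qed.

Lemma iprZr (r : R) x z : ipr x (r%:C%C *: z) = r * ipr x z.
Proof. by rewrite iprC iprZl iprC. Qed.

Lemma iprNl x z : ipr (- x) z = - ipr x z.
Proof. by rewrite -scaleN1r -(rmorphN1 (real_complex R)) iprZl mulN1r. Qed.

Lemma iprNr x z : ipr x (- z) = - ipr x z.
Proof. by rewrite iprC iprNl iprC. Qed.

Lemma iprBl x y z : ipr (x - y) z = ipr x z - ipr y z.
Proof. by rewrite iprDl iprNl. Qed.

Lemma iprBr x y z : ipr x (y - z) = ipr x y - ipr x z.
Proof. by rewrite iprDr iprNr. Qed.

Lemma ip_hnorm2 x : ip x x = (hnorm2 x)%:C%C.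
Proof. exact: ge0_complex_real (ipxx_ge0 x). Qed.

Lemma hnorm2_ge0 x : 0 <= hnorm2 x.
Proof. by have := ipxx_ge0 x; rewrite ip_hnorm2 ler0c. Qed.

Lemma hnorm2_eq0 x : hnorm2 x = 0 -> x = 0.
Proof. by move=> x0; apply: ipxx_eq0; rewrite ip_hnorm2 x0. Qed.

Lemma hnorm2D x y : hnorm2 (x + y) = hnorm2 x + 2 * ipr x y + hnorm2 y.
Proof. by rewrite /hnorm2 iprDl !iprDr (iprC y x); ring. Qed.

Lemma hnorm2B x y : hnorm2 (x - y) = hnorm2 x - 2 * ipr x y + hnorm2 y.
Proof. by rewrite /hnorm2 iprBl !iprBr (iprC y x); ring. Qed.

Lemma hnorm2Zr (r : R) x : hnorm2 (r%:C%C *: x) = r ^+ 2 * hnorm2 x.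
Proof. by rewrite /hnorm2 iprZl iprZr mulrA expr2. Qed.

Lemma hnorm2Z a x : hnorm2 (a *: x) = normc a ^+ 2 * hnorm2 x.
Proof.
rewrite {1}/hnorm2 /ipr ipZl ipZr mulrA ip_hnorm2 mulrC Re_realM mulrC.
by rewrite (mulrC a) Re_conjM.
Qed.

Lemma hnormE x : hnorm ip x = Num.sqrt (hnorm2 x).
Proof. by []. Qed.

Lemma sqr_hnorm x : hnorm ip x ^+ 2 = hnorm2 x.
Proof. exact/sqr_sqrtr/hnorm2_ge0. Qed.

Lemma hnorm_ge0 x : 0 <= hnorm ip x.
Proof. exact: sqrtr_ge0. Qed.

Lemma hnorm0 : hnorm ip 0 = 0.
Proof. by rewrite /hnorm ip0l sqrtr0. Qed.

Lemma hnormZ a x : hnorm ip (a *: x) = normc a * hnorm ip x.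
Proof.
by rewrite !hnormE hnorm2Z sqrtrM ?sqr_ge0 // sqrtr_sqr ger0_norm // normc_ge0.
Qed.

Lemma ipr_suml (I : Type) (r : seq I) (Pr : pred I) (F : I -> V) y :
  ipr (\sum_(i <- r | Pr i) F i) y = \sum_(i <- r | Pr i) ipr (F i) y.
Proof.
by elim/big_rec2: _ => [|i u v _ <-]; rewrite ?ipr0l ?iprDl.
Qed.

Lemma ip_eqr u v : (forall z, ip z u = ip z v) -> u = v.
Proof.
move=> uv; apply/eqP; rewrite -subr_eq0; apply/eqP/ipxx_eq0.
by rewrite -[- v]scaleN1r ipDr ipZr uv conjCN1 mulN1r subrr.
Qed.

Lemma hnorm_eq0 x : hnorm ip x = 0 -> x = 0.
Proof. by move=> x0; apply: hnorm2_eq0; rewrite -sqr_hnorm x0 expr0n. Qed.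

Lemma ipr_le_hnormM x y : ipr x y <= hnorm ip x * hnorm ip y.
Proof.
have [->|x0] := eqVneq x 0; first by rewrite ipr0l hnorm0 mul0r.
have [->|y0] := eqVneq y 0; first by rewrite iprC ipr0l hnorm0 mulr0.
set a := hnorm ip x; set b := hnorm ip y.
have a0 : 0 < a by rewrite lt_def hnorm_ge0 andbT; apply: contra_neq x0 => /hnorm_eq0.
have b0 : 0 < b by rewrite lt_def hnorm_ge0 andbT; apply: contra_neq y0 => /hnorm_eq0.
have := hnorm2_ge0 (b%:C%C *: x - a%:C%C *: y).
rewrite hnorm2B !hnorm2Zr iprZl iprZr -!sqr_hnorm -/a -/b.
have ab0 : 0 < a * b by rewrite mulr_gt0.
nra.
Qed.

Lemma hnormD x y : hnorm ip (x + y) <= hnorm ip x + hnorm ip y.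
Proof.
rewrite -(ler_pXn2r (n := 2)) ?nnegrE ?addr_ge0 ?hnorm_ge0 //.
rewrite sqr_hnorm hnorm2D sqrrD !sqr_hnorm lerD2r lerD2l.
have := ipr_le_hnormM x y; lra.
Qed.

Lemma hnormN x : hnorm ip (- x) = hnorm ip x.
Proof. by rewrite !hnormE /hnorm2 iprNl iprNr opprK. Qed.

End InnerProduct.

Section Operators.
Variables (R : realType) (V : lmodType R[i]) (ip : V -> V -> R[i]).
Hypothesis ip_inner : inner_product ip.

Definition clinear (A : V -> V) :=
  forall (a : R[i]) x y, A (a *: x + y) = a *: A x + A y.

Section ClinearTheory.
Variable A : V -> V.
Hypothesis A_lin : clinear A.

Lemma clinear0 : A 0 = 0.
Proof.
apply: (@addrI _ (A 0)); rewrite addr0.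
by rewrite -{1}(scale1r (A 0)) -A_lin scaler0 addr0.
Qed.

Lemma clinearD x y : A (x + y) = A x + A y.
Proof. by rewrite -[x]scale1r A_lin !scale1r. Qed.

Lemma clinearZ a x : A (a *: x) = a *: A x.
Proof. by rewrite -[a *: x]addr0 A_lin clinear0 addr0. Qed.

Lemma clinearB x y : A (x - y) = A x - A y.
Proof. by rewrite -scaleN1r clinearD clinearZ scaleN1r. Qed.

End ClinearTheory.

Lemma clinear_comp A B : clinear A -> clinear B -> clinear (A \o B).
Proof. by move=> A_lin B_lin a x y /=; rewrite B_lin A_lin. Qed.

Lemma bounded_op_ge0 A : bounded_op ip A ->
  exists2 M, 0 <= M & forall x, hnorm ip (A x) <= M * hnorm ip x.
Proof.
case=> _ [M AM]; exists `|M| => // x; apply: le_trans (AM x) _.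
by rewrite ler_wpM2r ?hnorm_ge0 ?ler_norm.
Qed.

Lemma bounded_op_id : bounded_op ip id.
Proof. by split=> [//|]; exists 1 => x; rewrite mul1r. Qed.

Lemma bounded_op_comp A B :
  bounded_op ip A -> bounded_op ip B -> bounded_op ip (A \o B).
Proof.
move=> bA bB; split; first exact: clinear_comp (proj1 bA) (proj1 bB).
have [MA MA0 AM] := bounded_op_ge0 bA; have [MB MB0 BM] := bounded_op_ge0 bB.
exists (MA * MB) => x /=; apply: le_trans (AM _) _.
by rewrite -mulrA ler_wpM2l.
Qed.

Lemma bounded_op_iter n A : bounded_op ip A -> bounded_op ip (iter n A).
Proof.
move=> bA; elim: n => [|n IH]; first exact: bounded_op_id.
exact: bounded_op_comp bA IH.
Qed.

Lemma adjoint_clinear A B : clinear A -> is_adjoint ip A B -> clinear B.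
Proof.
move=> A_lin AB a x y; apply: (ip_eqr ip_inner) => z.
by rewrite -AB !(ipDr ip_inner, ipZr ip_inner) !AB.
Qed.

Lemma adjoint_iter n A B : is_adjoint ip A B -> is_adjoint ip (iter n A) (iter n B).
Proof. by move=> AB; elim: n => [|n IH] x y //=; rewrite AB IH -iterSr. Qed.

Lemma clinear_hnorm_lower A (c : R) : clinear A ->
  (forall x, hnorm ip x = 1 -> c <= hnorm ip (A x)) ->
  forall x, c * hnorm ip x <= hnorm ip (A x).
Proof.
move=> A_lin Ac x; have [->|x0] := eqVneq x 0.
  by rewrite (hnorm0 ip_inner) mulr0 hnorm_ge0.
have s0 : 0 < hnorm ip x.
  by rewrite lt_def hnorm_ge0 andbT; apply: contra_neq x0 => /(hnorm_eq0 ip_inner).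
have := Ac ((hnorm ip x)^-1%:C%C *: x).
rewrite (clinearZ A_lin) !(hnormZ ip_inner) normc_real ger0_norm ?invr_ge0 ?hnorm_ge0 //.
by rewrite mulVf ?gt_eqF // => /(_ erefl); rewrite ler_pdivlMl // mulrC.
Qed.

End Operators.

Section PositiveOperator.
Variables (R : realType) (V : lmodType R[i]) (ip : V -> V -> R[i]).
Hypothesis ip_inner : inner_product ip.
Variables (P : V -> V) (M c : R).
Hypothesis P_lin : clinear P.
Hypothesis P_sym : forall x y, ipr ip (P x) y = ipr ip x (P y).
Hypothesis P_form_ge0 : forall x, 0 <= ipr ip (P x) x.
Hypothesis P_form_le : forall x, ipr ip (P x) x <= M * hnorm2 ip x.
Hypothesis M_gt0 : 0 < M.
Hypothesis c_gt0 : 0 < c.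
Hypothesis P_lower : forall x, c * hnorm ip x <= hnorm ip (P x).

Definition form_ge (t : R) := forall x, t * hnorm2 ip x <= ipr ip (P x) x.

Lemma form_ge0 : form_ge 0.
Proof. by move=> x; rewrite mul0r. Qed.

Lemma form_ge_le (t t' : R) : t' <= t -> form_ge t -> form_ge t'.
Proof.
by move=> le_t Pt x; apply: le_trans (Pt x); rewrite ler_wpM2r ?hnorm2_ge0.
Qed.

Lemma hnorm2_lower x : c ^+ 2 * hnorm2 ip x <= hnorm2 ip (P x).
Proof.
rewrite -!(sqr_hnorm ip_inner) -exprMn ler_pXn2r ?P_lower //.
  by rewrite nnegrE mulr_ge0 ?hnorm_ge0 ?ltW.
by rewrite nnegrE hnorm_ge0.
Qed.

(* Testing [form_ge t] at [M x - z] with [z = P x - t x] gives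
   [|z|^2 <= M (<P x, x> - t |x|^2)], while [|P x|^2 = |z + t x|^2 >= c^2 |x|^2]. *)
Lemma form_ge_step (t : R) : 0 <= t -> form_ge t -> forall x,
  (c ^+ 2 - t ^+ 2) * hnorm2 ip x <= (M + 2 * t) * (ipr ip (P x) x - t * hnorm2 ip x).
Proof.
move=> t0 Pt x.
set z := P x - t%:C%C *: x; set p := ipr ip (P x) x - t * hnorm2 ip x.
set w := hnorm2 ip z; set a := hnorm2 ip x.
have zx : ipr ip z x = p by rewrite (iprBl ip_inner) (iprZl ip_inner).
have Pxz : ipr ip (P x) z = w + t * p.
  by rewrite /w /hnorm2 {2}/z (iprBl ip_inner) (iprZl ip_inner) (iprC ip_inner x) zx addrNK.
have Px : hnorm2 ip (P x) = w + 2 * t * p + t ^+ 2 * a.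
  rewrite -[P x](subrK (t%:C%C *: x)) -/z (hnorm2D ip_inner) (iprZr ip_inner) zx.
  by rewrite (hnorm2Zr ip_inner); ring.
have Pzx : ipr ip (P z) x = w + t * p by rewrite P_sym (iprC ip_inner).
have w_le : w <= M * p.
  have Pzz := P_form_le z; have tw : 0 <= t * w by rewrite mulr_ge0 ?hnorm2_ge0.
  clearbody z; have := Pt (M%:C%C *: x - z).
  rewrite (clinearB P_lin) (clinearZ P_lin) (hnorm2B ip_inner) (hnorm2Zr ip_inner).
  rewrite !(iprBl ip_inner, iprBr ip_inner, iprZl ip_inner, iprZr ip_inner).
  have Pxx : ipr ip (P x) x = p + t * a by rewrite /p subrK.
  rewrite Pzx Pxz (iprC ip_inner x) zx Pxx -/a -/w; rewrite -/w in Pzz => Pt_y.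
  rewrite -subr_ge0 -(pmulr_rge0 _ M_gt0); lra.
have := hnorm2_lower x; rewrite Px -/a; nra.
Qed.

Section Approach.
Variable e : R.
Hypotheses (e_gt0 : 0 < e) (e_le_c : e <= c).

(* While [t <= c - e], the gain [(c^2 - t^2) / (M + 2 t)] of [form_ge_step] is at
   least [eta], so finitely many steps reach [c - e]. *)
Let eta := c * e / (M + 2 * c).

Lemma form_ge_incr (t : R) : 0 <= t -> t <= c - e -> form_ge t -> form_ge (t + eta).
Proof.
move=> t0 tce Pt; have Mt : 0 < M + 2 * t by rewrite ltr_wpDr ?mulr_ge0.
have Mc : 0 < M + 2 * c by rewrite ltr_wpDr ?mulr_ge0 ?ltW.
apply: form_ge_le (_ : form_ge (t + (c ^+ 2 - t ^+ 2) / (M + 2 * t))).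
  rewrite lerD2l /eta ler_pdivrMr // mulrAC ler_pdivlMr // [c * e]mulrC.
  have ec : e * c <= c ^+ 2 - t ^+ 2.
    have h1 : 0 <= (c - t - e) * (c + t) by apply: mulr_ge0; move: tce t0 c_gt0; lra.
    have h2 : 0 <= e * t by rewrite mulr_ge0 // ltW.
    by move: h1 h2; rewrite expr2 (expr2 t); lra.
  apply: ler_pM => //; rewrite ?mulr_ge0 ?ltW //.
  by move: tce e_gt0; lra.
move=> x; have := form_ge_step t0 Pt x; rewrite -ler_pdivrMl //.
set a := hnorm2 ip x.
have -> : (t + (c ^+ 2 - t ^+ 2) / (M + 2 * t)) * a =
  t * a + (M + 2 * t)^-1 * ((c ^+ 2 - t ^+ 2) * a) by ring.
by rewrite -lerBrDl.
Qed.

Lemma form_ge_sub : form_ge (c - e).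
Proof.
have eta0 : 0 < eta by rewrite divr_gt0 ?mulr_gt0 ?ltr_wpDr ?mulr_ge0 ?ltW.
have Pn n : n%:R * eta <= c - e -> form_ge (n%:R * eta).
  elim: n => [|n IH]; first by rewrite mul0r => _; apply: form_ge0.
  rewrite -nat1r mulrDl mul1r addrC => le_ce.
  have le_n : n%:R * eta <= c - e by move: le_ce eta0; lra.
  by apply: form_ge_incr (IH le_n); rewrite // mulr_ge0 // ltW.
have ce0 : 0 <= (c - e) / eta by rewrite divr_ge0 ?subr_ge0 // ltW.
have /andP[le_N lt_N] := truncn_itv ce0.
rewrite ler_pdivlMr // in le_N; rewrite ltr_pdivrMr // -nat1r mulrDl mul1r in lt_N.
apply: form_ge_le (form_ge_incr _ le_N (Pn _ le_N)); last by rewrite mulr_ge0 // ltW.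
by move: lt_N; lra.
Qed.

End Approach.

Lemma form_ge_lower_bound : form_ge c.
Proof.
move=> x; have [a0|a_gt0] := eqVneq (hnorm2 ip x) 0; first by rewrite a0 mulr0.
have {a_gt0}a_gt0 : 0 < hnorm2 ip x by rewrite lt_def a_gt0 hnorm2_ge0.
apply/ler_addgt0Pr => e e0; set d := Num.min c (e / hnorm2 ip x).
have d0 : 0 < d by rewrite lt_min c_gt0 divr_gt0.
have dc : d <= c by rewrite ge_min lexx.
have de : d * hnorm2 ip x <= e by rewrite -ler_pdivlMr // ge_min lexx orbT.
by have := form_ge_sub d0 dc x; rewrite mulrBl; lra.
Qed.

End PositiveOperator.

Definition multinomial_coef (F : numFieldType) (m k : nat) (al : 'I_m -> nat) : F :=
  (k`!)%:R / \prod_(j < m) ((al j)`!)%:R.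

Lemma multinomial_coef_ge0 (F : numFieldType) m k (al : 'I_m -> nat) : 0 <= multinomial_coef F k al.
Proof. by rewrite divr_ge0 ?prodr_ge0. Qed.

Definition ffun_cons (X : finType) n (a : X) (g : {ffun 'I_n -> X}) : {ffun 'I_n.+1 -> X} :=
  [ffun i => if unlift ord0 i is Some j then g j else a].

Lemma ffun_cons0 (X : finType) n (a : X) (g : {ffun 'I_n -> X}) : ffun_cons a g ord0 = a.
Proof. by rewrite ffunE unlift_none. Qed.

Lemma ffun_consS (X : finType) n (a : X) (g : {ffun 'I_n -> X}) j :
  ffun_cons a g (lift ord0 j) = g j.
Proof. by rewrite ffunE liftK. Qed.

Lemma big_ffun_cons (U : nmodType) (X : finType) n (P : pred {ffun 'I_n.+1 -> X})
    (G : {ffun 'I_n.+1 -> X} -> U) :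
  \sum_(f | P f) G f =
  \sum_(a : X) \sum_(g : {ffun 'I_n -> X} | P (ffun_cons a g)) G (ffun_cons a g).
Proof.
rewrite pair_big_dep (reindex (fun p : X * {ffun 'I_n -> X} => ffun_cons p.1 p.2)) //=.
apply: onW_bij.
exists (fun f : {ffun 'I_n.+1 -> X} => (f ord0, [ffun j : 'I_n => f (lift ord0 j)]))
  => [[a g]|f] /=.
  by rewrite ffun_cons0; congr pair; apply/ffunP => j; rewrite ffunE ffun_consS.
by apply/ffunP => i; rewrite ffunE; case: unliftP => [j ->|->]; rewrite ?ffunE.
Qed.

Section Multinomial.
Variable F : numFieldType.

Lemma multinomial_coef_cons n k (a : nat) (al : 'I_n -> nat) : (a <= k)%N ->
  multinomial_coef F k (fun i : 'I_n.+1 => if unlift ord0 i is Some j then al j else a)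
  = 'C(k, a)%:R * multinomial_coef F (k - a) al.
Proof.
move=> ak; rewrite /multinomial_coef big_ord_recl unlift_none.
under eq_bigr => j _ do rewrite liftK.
have fact_neq0 p : (p`!)%:R != 0 :> F by rewrite pnatr_eq0 -lt0n fact_gt0.
have prod_neq0 : \prod_(j < n) ((al j)`!)%:R != 0 :> F by apply/prodf_neq0 => j _.
rewrite -(bin_fact ak) !natrM; field.
by rewrite prod_neq0 !fact_neq0.
Qed.

(* Exponents range over ['I_K.+1] for any [K >= k] so that the induction on [m]
   can keep [K] fixed while the total degree drops to [k - a]. *)
Lemma multinomial_exprn m K k (q : 'I_m -> F) : (k <= K)%N ->
  \sum_(al : {ffun 'I_m -> 'I_K.+1} | (\sum_(j < m) (al j : nat))%N == k)
    multinomial_coef F k (fun j => al j : nat) * \prod_(j < m) q j ^+ al j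
  = (\sum_(j < m) q j) ^+ k.
Proof.
elim: m K k q => [|m IH] K k q kK.
  rewrite big_ord0; under eq_bigl do rewrite big_ord0.
  case: k kK => [|k] _; last by rewrite big_pred0 // expr0n.
  have al0 (al : {ffun 'I_0 -> 'I_K.+1}) : al = [ffun=> ord0] by apply/ffunP => -[].
  rewrite (big_pred1 [ffun=> ord0]) => [|al]; last by rewrite (al0 al) /= !eqxx.
  by rewrite /multinomial_coef !big_ord0 divr1 mulr1.
rewrite [in RHS]big_ord_recl addrC exprDn.
rewrite (big_ord_widen K.+1 (fun i : nat =>
  ((\sum_(j < m) q (lift ord0 j)) ^+ (k - i) * q ord0 ^+ i) *+ 'C(k, i)) (kK : k < K.+1)%N).
rewrite big_ffun_cons (bigID (fun a : 'I_K.+1 => (a < k.+1)%N)) /=.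
rewrite [X in _ + X]big1 ?addr0 => [|a ak]; last first.
  rewrite big_pred0 // => g; rewrite big_ord_recl ffun_cons0.
  by apply/negbTE; apply: contra ak => /eqP <-; rewrite ltnS leq_addr.
apply: eq_bigr => a ak.
rewrite -(IH K (k - a)%N (fun j => q (lift ord0 j))); last by lia.
rewrite -mulr_natl mulr_suml mulr_sumr; apply: eq_big => [g|g _].
  rewrite big_ord_recl ffun_cons0; under eq_bigr do rewrite ffun_consS.
  by rewrite -[in RHS](eqn_add2l a) subnKC.
rewrite big_ord_recl ffun_cons0; under eq_bigr do rewrite ffun_consS.
rewrite (_ : (fun j => _) = fun i => if unlift ord0 i is Some j then g j : nat else a).
  by rewrite multinomial_coef_cons //; ring.
by apply/funext => i; rewrite ffunE; case: unlift.
Qed.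

End Multinomial.

Section MultiIndexPowers.
Variables (R : realType) (V : lmodType R[i]) (ip : V -> V -> R[i]).
Hypothesis ip_inner : inner_product ip.
Variables (m : nat) (T Ts : 'I_m -> V -> V).
Hypothesis T_bounded : forall j, bounded_op ip (T j).
Hypothesis T_adjoint : forall j, is_adjoint ip (T j) (Ts j).

Lemma Tpow_bounded al : bounded_op ip (Tpow T al).
Proof.
rewrite /Tpow; elim: (enum 'I_m) => [|j s IH] /=; first exact: bounded_op_id.
exact: bounded_op_comp (bounded_op_iter _ (T_bounded j)) IH.
Qed.

Lemma Tpow_adjoint al : is_adjoint ip (Tpow T al) (Tstarpow Ts al).
Proof.
rewrite /Tpow /Tstarpow; elim: (enum 'I_m) => [|j s IH] x y //=.
by rewrite (adjoint_iter _ (T_adjoint j)) IH.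
Qed.

Lemma Tstarpow_clinear al : clinear (Tstarpow Ts al).
Proof.
apply: (adjoint_clinear ip_inner _ (Tpow_adjoint al)).
exact: (proj1 (Tpow_bounded al)).
Qed.

Variable k : nat.
Local Notation Q := (QTk T Ts k).
Local Notation multi_indices := (fun al : {ffun 'I_m -> 'I_k.+1} => (\sum_(j < m) (al j : nat))%N == k).
Local Notation nat_of al := (fun j => (al j : nat)).

Lemma QTkE x : Q x = \sum_(al | multi_indices al)
  (multinomial_coef R k (nat_of al))%:C%C *: Tstarpow Ts (nat_of al) (Tpow T (nat_of al) x).
Proof.
apply: eq_bigr => al _; congr (_ *: _).
by rewrite rmorphM fmorphV rmorph_nat rmorph_prod; under [in RHS]eq_bigr do rewrite rmorph_nat.
Qed.

Lemma QTk_clinear : clinear Q.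
Proof.
move=> a x y; rewrite !QTkE scaler_sumr -big_split; apply: eq_bigr => al _ /=.
rewrite (proj1 (Tpow_bounded _)) Tstarpow_clinear !scalerDr !scalerA.
by rewrite mulrC.
Qed.

Lemma ipr_QTk x y : ipr ip (Q x) y =
  \sum_(al | multi_indices al)
    multinomial_coef R k (nat_of al) * ipr ip (Tpow T (nat_of al) x) (Tpow T (nat_of al) y).
Proof.
rewrite QTkE (ipr_suml ip_inner); apply: eq_bigr => al _.
by rewrite (iprZl ip_inner) (iprC ip_inner) /ipr -Tpow_adjoint -/(ipr _ _ _) (iprC ip_inner).
Qed.

Lemma QTk_sym x y : ipr ip (Q x) y = ipr ip x (Q y).
Proof.
by rewrite (iprC ip_inner x) !ipr_QTk; apply: eq_bigr => al _; rewrite (iprC ip_inner).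
Qed.

Lemma QTk_form_ge0 x : 0 <= ipr ip (Q x) x.
Proof.
by rewrite ipr_QTk; apply: sumr_ge0 => al _; rewrite mulr_ge0 ?multinomial_coef_ge0 ?hnorm2_ge0.
Qed.

Lemma QTk_form_le : exists2 M, 0 < M & forall x, ipr ip (Q x) x <= M * hnorm2 ip x.
Proof.
have /boolp.choice[M AM] : forall al : {ffun 'I_m -> 'I_k.+1}, exists M, 0 <= M /\
    forall x, hnorm2 ip (Tpow T (nat_of al) x) <= M * hnorm2 ip x.
  move=> al; have [M M0 AM] := bounded_op_ge0 (Tpow_bounded (nat_of al)).
  exists (M ^+ 2); split=> [|x]; first exact: sqr_ge0.
  by rewrite -!(sqr_hnorm ip_inner) -exprMn ler_pXn2r ?nnegrE ?mulr_ge0 ?hnorm_ge0.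
exists (1 + \sum_(al | multi_indices al) multinomial_coef R k (nat_of al) * M al).
  rewrite ltr_wpDr // sumr_ge0 // => al _.
  by rewrite mulr_ge0 ?multinomial_coef_ge0 //; case: (AM al).
move=> x; rewrite ipr_QTk mulrDl mul1r mulr_suml -[X in X <= _]add0r.
rewrite lerD ?hnorm2_ge0 // ler_sum // => al _.
rewrite -[X in _ <= X]mulrA; apply: ler_wpM2l; first exact: multinomial_coef_ge0.
by case: (AM al) => _; apply.
Qed.

End MultiIndexPowers.

Section ApproximateEigenvectors.
Variables (R : realType) (V : lmodType R[i]) (ip : V -> V -> R[i]).
Hypothesis ip_inner : inner_product ip.
Variable h : nat -> V.

Definition approx_eigen (A : V -> V) (a : R[i]) :=
  (fun n => hnorm ip (A (h n) - a *: h n)) @ \oo --> (0 : R).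

Lemma approx_eigen_id : approx_eigen id 1.
Proof.
apply: cvg_near_cst; near=> n.
by rewrite scale1r subrr (hnorm0 ip_inner).
Unshelve. all: by end_near. Qed.

Lemma approx_eigen_comp A B a b : bounded_op ip A ->
  approx_eigen A a -> approx_eigen B b -> approx_eigen (A \o B) (a * b).
Proof.
move=> bA eA eB; have [M M0 AM] := bounded_op_ge0 bA.
apply: (@squeeze_cvgr _ _ _ _ (cst 0)
  (fun n => M * hnorm ip (B (h n) - b *: h n) + normc b * hnorm ip (A (h n) - a *: h n))).
- near=> n; rewrite hnorm_ge0 /=.
  have -> : A (B (h n)) - (a * b) *: h n = A (B (h n) - b *: h n) + b *: (A (h n) - a *: h n).
    by rewrite (clinearB (proj1 bA)) (clinearZ (proj1 bA)) scalerBr scalerA (mulrC b) addrA subrK.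
  apply: le_trans (hnormD ip_inner _ _) _.
  by rewrite (hnormZ ip_inner) lerD2r AM.
- exact: cvg_cst.
- rewrite (_ : 0 = M * 0 + normc b * 0); last by rewrite !mulr0 addr0.
  by apply: cvgD; apply: cvgMr.
Unshelve. all: by end_near. Qed.

Lemma approx_eigen_iter n A a : bounded_op ip A ->
  approx_eigen A a -> approx_eigen (iter n A) (a ^+ n).
Proof.
move=> bA eA; elim: n => [|n IH]; first exact: approx_eigen_id.
by rewrite exprS; apply: approx_eigen_comp.
Qed.

Hypothesis h_unit : forall n, hnorm ip (h n) = 1.

Lemma approx_eigen_hnorm A a : approx_eigen A a ->
  (fun n => hnorm ip (A (h n))) @ \oo --> normc a.
Proof.
move=> eA; have ah n : hnorm ip (a *: h n) = normc a by rewrite (hnormZ ip_inner) h_unit mulr1.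
apply: (@squeeze_cvgr _ _ _ _ (fun n => normc a - hnorm ip (A (h n) - a *: h n))
  (fun n => normc a + hnorm ip (A (h n) - a *: h n))).
- near=> n; apply/andP; split.
    rewrite lerBlDr -{1}(ah n) -(hnormN ip_inner (_ - _)) opprB.
    by apply: le_trans (hnormD ip_inner _ _); rewrite addrC subrK.
  by rewrite -(ah n); apply: le_trans (hnormD ip_inner _ _); rewrite addrC subrK.
- by rewrite -{2}[normc a]subr0; apply: cvgB => //; exact: cvg_cst.
- by rewrite -{2}[normc a]addr0; apply: cvgD => //; exact: cvg_cst.
Unshelve. all: by end_near. Qed.

End ApproximateEigenvectors.

Lemma exprn_powRV (R : realType) (z : R) n : 0 <= z -> (0 < n)%N ->
  (z `^ n%:R^-1) ^+ n = z.
Proof.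
move=> z0 n0; rewrite -powR_mulrn ?powR_ge0 // -powRrM mulVf ?powRr1 //.
by rewrite pnatr_eq0 -lt0n.
Qed.

Lemma m_infty_gt (R : realType) (V : lmodType R[i]) (ip : V -> V -> R[i])
    (m : nat) (T Ts : 'I_m -> V -> V) (r : R) :
  0 <= r -> (r%:E < m_infty ip T Ts)%E ->
  exists k, exists2 c, r ^+ (2 * k) < c &
    forall x, hnorm ip x = 1 -> c <= hnorm ip (QTk T Ts k x).
Proof.
move=> r0 /ereal_sup_gt[_ [k k1 <-]].
set S := ereal_inf _ => rS.
have [y ry yS] : exists2 y : R, r < y & (y%:E <= S)%E.
  case: S rS => [s| |] // rs; first by exists s; rewrite -?lte_fin.
  by exists (r + 1); rewrite ?ltrDl ?leey.
have k0 : (0 < 2 * k)%N by rewrite muln_gt0.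
exists k, (y ^+ (2 * k)); first by rewrite ltrXn2r ?gtn_eqF // ltW.
move=> x x1; rewrite -(exprn_powRV (hnorm_ge0 _ _) k0) lerXn2r ?nnegrE ?powR_ge0 ?gtn_eqF //.
  exact: le_trans r0 (ltW ry).
by rewrite -lee_fin (le_trans yS) //; apply: ereal_inf_lbound; exists x.
Qed.

Section JointSpectrum.
Variables (R : realType) (V : lmodType R[i]) (ip : V -> V -> R[i]).
Hypothesis ip_inner : inner_product ip.
Variables (m : nat) (T Ts : 'I_m -> V -> V) (lam : 'I_m -> R[i]) (h : nat -> V).
Hypothesis T_bounded : forall j, bounded_op ip (T j).
Hypothesis T_adjoint : forall j, is_adjoint ip (T j) (Ts j).
Hypothesis h_unit : forall n, hnorm ip (h n) = 1.

Lemma approx_eigen_of_sum :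
  ((fun n => \sum_(j < m) hnorm ip (T j (h n) - lam j *: h n)) : R^nat) @ \oo --> (0 : R^o) ->
  forall j, approx_eigen ip h (T j) (lam j).
Proof.
move=> sum0 j; apply: (@squeeze_cvgr _ _ _ _ (cst 0) _ _ _ _ _ sum0); last exact: cvg_cst.
near=> n; rewrite hnorm_ge0 /= (bigD1 j) //= lerDl.
by apply: sumr_ge0 => i _; apply: hnorm_ge0.
Unshelve. all: by end_near. Qed.

Hypothesis T_approx : forall j, approx_eigen ip h (T j) (lam j).

Lemma approx_eigen_Tpow al : approx_eigen ip h (Tpow T al) (\prod_(j < m) lam j ^+ al j).
Proof.
rewrite -big_enum /Tpow /=; elim: (enum 'I_m) => [|j s IH] /=.
  by rewrite big_nil; apply: approx_eigen_id.
rewrite big_cons; apply: (approx_eigen_comp ip_inner _ _ IH); first exact: bounded_op_iter.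
exact: approx_eigen_iter (T_bounded j) (T_approx j).
Qed.

Lemma QTk_form_cvg k :
  (fun n => ipr ip (QTk T Ts k (h n)) (h n)) @ \oo --> norm2 lam ^+ (2 * k).
Proof.
under eq_fun do rewrite (ipr_QTk ip_inner T_adjoint).
rewrite /norm2 exprM sqr_sqrtr; last by apply: sumr_ge0 => j _; rewrite Re_conjM sqr_ge0.
rewrite (eq_bigr (fun j => normc (lam j) ^+ 2)) => [|j _]; last exact: Re_conjM.
rewrite -(multinomial_exprn _ (leqnn k)).
apply: cvg_big => [|al _]; first exact: add_continuous.
apply: cvgMr.
set T_al := Tpow T (fun j => al j : nat).
have -> : \prod_(j < m) (normc (lam j) ^+ 2) ^+ al j = normc (\prod_(j < m) lam j ^+ al j) ^+ 2.
  by rewrite normc_prod -prodrXl; apply: eq_bigr => j _; rewrite normcX -!exprM mulnC.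
have -> : (fun n => ipr ip (T_al (h n)) (T_al (h n))) =
    (fun n => hnorm ip (T_al (h n))) \* (fun n => hnorm ip (T_al (h n))).
  by apply/funext => n /=; rewrite -expr2 (sqr_hnorm ip_inner).
by rewrite expr2; apply: cvgM; apply: (approx_eigen_hnorm ip_inner h_unit); apply: approx_eigen_Tpow.
Qed.

End JointSpectrum.

Theorem lemma3p6 (R : realType) (V : lmodType R[i]) (ip : V -> V -> R[i])
  (m : nat) (T Ts : 'I_m -> V -> V) :
  hilbert_space ip ->
  (forall j, bounded_op ip (T j)) ->
  (forall j, is_adjoint ip (T j) (Ts j)) ->
  (forall i j, T i \o T j = T j \o T i) ->
  forall lam : 'I_m -> R[i],
    ((norm2 lam)%:E < m_infty ip T Ts)%E -> ~ sigma_ap ip T lam.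
Proof.
move=> [ip_inner _] T_bounded T_adjoint _ lam lt_lam [h [h_unit h_cvg]].
have [k [c lt_c Qc]] := m_infty_gt (sqrtr_ge0 _) lt_lam.
have c_gt0 : 0 < c by apply: le_lt_trans lt_c; rewrite exprn_ge0 ?sqrtr_ge0.
have Q_lin := QTk_clinear ip_inner T_bounded T_adjoint k.
have [M M_gt0 QM] := QTk_form_le ip_inner T_bounded T_adjoint k.
have Q_form_ge := form_ge_lower_bound ip_inner Q_lin (QTk_sym ip_inner T_adjoint k)
  (QTk_form_ge0 ip_inner T_adjoint k) QM M_gt0 c_gt0 (clinear_hnorm_lower ip_inner Q_lin Qc).
have T_approx := approx_eigen_of_sum h_cvg.
have : c <= norm2 lam ^+ (2 * k).
  apply: cvgr_to_ge (QTk_form_cvg ip_inner T_bounded T_adjoint h_unit T_approx (k := k)) _.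
  near=> n; have := Q_form_ge (h n).
  by rewrite -(sqr_hnorm ip_inner) h_unit expr1n mulr1.
by rewrite leNgt lt_c.
Unshelve. all: by end_near. Qed.
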